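(* Let $c,d\in\mathbb{N}$ and $I=\mathbb{N}^d\times[c]$. Then every $\mathrm{Sym}$-invariant lattice $L\subseteq\mathbb{Z}^{(I)}$ has a finite equivariant generating set, i.e. there is a finite set $\mathcal{B}\subseteq L$ such that $L$ is generated as an abelian group by $\mathrm{Sym}(\mathcal{B})=\{\sigma(\mathbf{u})\mid\sigma\in\mathrm{Sym},\mathbf{u}\in\mathcal{B}\}$.
   Context: $\mathbb{N}=\{1,2,\dots\}$, $[c]=\{1,\dots,c\}$. $\mathbb{Z}^{(I)}$ is the free abelian group with basis $I$ (finitely supported integer vectors indexed by $I$), with standard basis $\mathbf{e}_{\mathbf{i},j}$, $\mathbf{i}\in\mathbb{N}^d$, $j\in[c]$; a lattice is any subgroup of $\mathbb{Z}^{(I)}$. $\mathrm{Sym}$ is the group of permutations of $\mathbb{N}$ fixing all but finitely many elements; it acts on $\mathbb{Z}^{(I)}$ by the linear extension of $\sigma(\mathbf{e}_{(i_1,\dots,i_d),j})=\mathbf{e}_{(\sigma(i_1),\dots,\sigma(i_d)),j}$. A lattice $L$ is $\mathrm{Sym}$-invariant if $\sigma(L)\subseteq L$ for all $\sigma\in\mathrm{Sym}$. *)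

From Stdlib Require List.
From mathcomp Require Import all_boot all_order all_algebra.
Set Implicit Arguments. Unset Strict Implicit. Unset Printing Implicit Defensive.
Import Order.TTheory GRing.Theory Num.Theory.
Local Open Scope ring_scope.

(* Multi-indices i in N^d, encoded as d-tuples of nat.  NB: N = {1,2,...} in
   the paper is relabelled as nat = {0,1,...} via n |-> n-1; this is a
   bijection commuting with the permutation action. *)
Definition idx (d : nat) := (d.-tuple nat)%type.

(* Integer vectors indexed by I = N^d x [c] (not yet required finitely supported). *)
Definition vec (d c : nat) := (idx d -> 'I_c -> int)%type.

Definition finsupp (d c : nat) (u : vec d c) : Prop :=
  exists s : seq (idx d), forall (i : idx d) (j : 'I_c), i \notin s -> u i j = 0.

Definition is_lattice (d c : nat) (L : vec d c -> Prop) : Prop :=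
  [/\ forall u, L u -> finsupp u,
      L (fun _ _ => 0),
      forall u v, L u -> L v -> L (fun i j => u i j + v i j)
    & forall u, L u -> L (fun i j => - u i j)].

Definition isSym (sigma : nat -> nat) : Prop :=
  bijective sigma /\ exists N : nat, forall n : nat, (N <= n)%N -> sigma n = n.

(* sym_act sigma u v  <->  v = sigma(u), where sigma(e_{i,j}) = e_{sigma(i),j}
   extended linearly, i.e. v_{(sigma i_1,...,sigma i_d), j} = u_{i,j}. *)
Definition sym_act (d c : nat) (sigma : nat -> nat) (u v : vec d c) : Prop :=
  forall (i : idx d) (j : 'I_c), v [tuple of map sigma i] j = u i j.

Definition sym_invariant (d c : nat) (L : vec d c -> Prop) : Prop :=
  forall sigma, isSym sigma -> forall u v, L u -> sym_act sigma u v -> L v.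

Definition sym_orbit (d c : nat) (B : seq (vec d c)) (v : vec d c) : Prop :=
  exists sigma u, [/\ isSym sigma, List.In u B & sym_act sigma u v].

Definition zspan (d c : nat) (S : vec d c -> Prop) (v : vec d c) : Prop :=
  exists l : seq (int * vec d c),
    (forall p, List.In p l -> S p.2) /\
    forall i j, v i j = \sum_(p <- l) p.1 * p.2 i j.

From Stdlib Require List Wf_nat Wellfounded.
From Stdlib Require Import Classical ClassicalEpsilon FunctionalExtensionality.
From mathcomp Require Import all_boot all_algebra zify.
Set Implicit Arguments. Unset Strict Implicit. Unset Printing Implicit Defensive.
Import GRing.Theory.

(* Order the monomials e_(i,j) lexicographically.  This is a well-order, it is
   preserved by every strictly increasing map of nat, and such a map agrees
   with an element of Sym on the finite support of any vector.  Say that m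
   shifts to m' if an increasing map sends m to m'; then a lattice vector with
   leading monomial m has a Sym-translate with leading monomial m' and the same
   leading coefficient.  Hence a finite set B of lattice vectors generates L as
   soon as, for every m, the leading coefficient of every lattice vector led by
   m is a multiple of the gcd of the leading coefficients of the elements of B
   whose leading monomial shifts to m: leading terms are then cancelled by
   integer combinations of Sym-translates, and one concludes by well-founded
   induction.  Such a B exists: otherwise there is a sequence of lattice
   vectors, each violating this condition for the earlier ones; shifting is a
   well-quasi-order (Dickson's lemma on finitely many monotone coordinates), so
   along a subsequence the leading monomials form a shift chain, and the running
   gcd of the leading coefficients would decrease forever. *)

Fixpoint lexlt (s t : seq nat) : bool :=
  match s, t with
  | a :: s', b :: t' => (a < b) || (a == b) && lexlt s' t'
  | _, _ => false
  end.

Lemma lexlt_trans : transitive lexlt.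
Proof.
move=> t s u; elim: s t u => [|a s IH] [|b t] [|c u] //=.
case/orP=> [ab|/andP[/eqP <- st]]; case/orP=> [bc|/andP[/eqP <- tu]].
- by rewrite (ltn_trans ab bc).
- by rewrite ab.
- by rewrite bc.
- by rewrite (IH _ _ st tu) eqxx orbT.
Qed.

Lemma lexlt_total s t : size s = size t -> s != t -> lexlt s t || lexlt t s.
Proof.
elim: s t => [|a s IH] [|b t] //= [Est] neq.
case: (ltngtP a b) => [//|//|eab] /=.
by apply: IH => //; apply: contraNneq neq => ->; rewrite eab.
Qed.

Lemma lexlt_map (f : nat -> nat) : {homo f : a b / a < b} ->
  forall s t, lexlt (map f s) (map f t) = lexlt s t.
Proof.
move=> f_incr; have f_ltn := leqW_mono (leq_mono f_incr).
have f_eq := inj_eq (incn_inj (leq_mono f_incr)).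
by elim=> [|a s IH] [|b t] //=; rewrite f_ltn f_eq IH.
Qed.

Lemma lexlt_wf n : well_founded (fun s t => (size s == n) && lexlt s t).
Proof.
elim: n => [|n IH] t; first by constructor=> s /andP[/eqP/size0nil ->].
have Acc_cons a s : size s = n -> Acc (fun s t => (size s == n.+1) && lexlt s t) (a :: s).
  elim/ltn_ind: a s => a IHa s sz_s; elim: (IH s) => {}s _ IHs in sz_s *.
  constructor=> [[//|b s']] /andP[/eqP[sz_s']] /= /orP[ba|/andP[/eqP-> lt_s's]].
  - exact: IHa.
  - by apply: IHs; rewrite // sz_s' eqxx.
constructor=> [[//|a s]] /andP[/eqP[sz_s] _]; exact: Acc_cons.
Qed.

Lemma isSym_id : isSym id.
Proof. by split; [exists id | exists 0]. Qed.

Lemma isSym_comp sigma tau : isSym sigma -> isSym tau -> isSym (sigma \o tau).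
Proof.
move=> [bij_s [M fix_s]] [bij_t [N fix_t]]; split; first exact: bij_comp.
by exists (maxn M N) => n; rewrite geq_max => /andP[Mn Nn] /=; rewrite fix_t ?fix_s.
Qed.

Definition swapn (a b x : nat) : nat := if x == a then b else if x == b then a else x.

Lemma swapnK a b : involutive (swapn a b).
Proof.
move=> x; rewrite /swapn; case: (eqVneq x a) => [->|xa].
  by rewrite eqxx; case: (eqVneq b a) => [->|_]; rewrite ?eqxx.
by case: (eqVneq x b) => [->|xb]; rewrite ?eqxx // (negbTE xa) (negbTE xb).
Qed.

Lemma isSym_swapn a b : isSym (swapn a b).
Proof.
split; first exact: inv_bij (swapnK a b).
exists (maxn a b).+1 => n; rewrite gtn_max => /andP[an bn].
by rewrite /swapn gtn_eqF // gtn_eqF.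
Qed.

Lemma incr_agrees_with_Sym (f : nat -> nat) n : {homo f : x y / x < y} ->
  exists2 sigma, isSym sigma & forall x, x < n -> sigma x = f x.
Proof.
move=> f_incr; elim: n => [|n [sigma Ssigma sigma_f]]; first by exists id; first exact: isSym_id.
exists (swapn (sigma n) (f n) \o sigma); first exact/isSym_comp/Ssigma/isSym_swapn.
move=> x; rewrite ltnS leq_eqVlt => /orP[/eqP-> | xn] /=; first by rewrite /swapn eqxx.
have [/bij_inj sigma_inj _] := Ssigma.
rewrite /swapn sigma_f // (inj_eq (incn_inj (leq_mono f_incr))) -sigma_f //.
by rewrite (inj_eq sigma_inj) !ltn_eqF.
Qed.

Lemma ex_least_nat (P : nat -> Prop) :
  (exists n, P n) -> exists n, P n /\ forall m, P m -> n <= m.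
Proof.
move=> /(Wf_nat.dec_inh_nat_subset_has_unique_least_element P (fun n => classic (P n))).
by move=> [n [[Pn n_least] _]]; exists n; split=> // m /n_least/leP.
Qed.

Lemma nondecreasing_subseq (y : nat -> nat) :
  exists2 phi, {homo phi : a b / a < b} & {homo y \o phi : a b / a <= b}.
Proof.
have next_ex n : exists i, n < i /\ forall i', n < i' -> y i <= y i'.
  have attained : exists v, exists2 i, n < i & y i = v by exists (y n.+1), n.+1.
  have [_ [[i ni <-] y_least]] := ex_least_nat attained.
  by exists i; split=> // i' ni'; apply: y_least; exists i'.
have [next nextP] := choice _ next_ex.
pose phi k := iter k.+1 next 0.
exists phi; first by apply: homo_ltn => [???|k]; [apply: ltn_trans | apply: (nextP _).1].
apply: homo_leq => [//|???|k]; first exact: leq_trans.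
exact/(nextP _).2/(ltn_trans (nextP _).1)/(nextP _).1.
Qed.

Lemma nondecreasing_subseq_fin (K : finType) (y : K -> nat -> nat) :
  exists2 phi, {homo phi : a b / a < b} & forall k, {homo y k \o phi : a b / a <= b}.
Proof.
suff [phi phi_incr y_phi] : exists2 phi, {homo phi : a b / a < b} &
    forall k, k \in enum K -> {homo y k \o phi : a b / a <= b}.
  by exists phi => // k; apply: y_phi; rewrite mem_enum.
elim: (enum K) => [|k0 s [phi phi_incr y_phi]]; first by exists id.
have [psi psi_incr y_psi] := nondecreasing_subseq (y k0 \o phi).
exists (phi \o psi) => [a b ab | k]; first exact/phi_incr/psi_incr.
rewrite inE => /orP[/eqP-> // | ks] a b ab.
exact/(y_phi k ks)/(ltnW_homo psi_incr).
Qed.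

Lemma seq_max_exists (T : eqType) (lt : rel T) :
  transitive lt -> (forall x y, x != y -> lt x y || lt y x) ->
  forall s : seq T, s != [::] -> exists2 m, m \in s & forall x, x \in s -> (x == m) || lt x m.
Proof.
move=> lt_trans lt_total; elim=> [//|a s IH] _.
have [-> | /IH[m ms m_max]] := eqVneq s [::].
  by exists a => [|x]; rewrite ?mem_seq1 ?mem_head // => ->.
case: (eqVneq a m) => [am | am].
  by exists a => [|x]; rewrite ?mem_head // inE am => /orP[-> // | /m_max].
case/orP: (lt_total _ _ am) => [lt_am | lt_ma].
  exists m => [|x]; first by rewrite inE ms orbT.
  by rewrite inE => /orP[/eqP-> | /m_max]; rewrite ?lt_am ?orbT.
exists a => [|x]; first exact: mem_head.
rewrite inE => /orP[-> // | /m_max /orP[/eqP-> | xm]]; first by rewrite lt_ma orbT.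
by rewrite (lt_trans m _ _ xm lt_ma) orbT.
Qed.

Section Monomials.
Variables d c : nat.
Local Notation mono := (idx d * 'I_c)%type.

Definition coef (v : vec d c) (m : mono) : int := v m.1 m.2.

(* Colour first; any lexicographic order would do, since all of them are
   preserved by increasing maps of nat (lexlt_map). *)
Definition mono_key (m : mono) : seq nat := val m.2 :: val m.1.
Definition mono_lt (m m' : mono) : bool := lexlt (mono_key m) (mono_key m').
Definition mono_le (m m' : mono) : bool := (m == m') || mono_lt m m'.

Definition is_lead (v : vec d c) (m : mono) : Prop :=
  coef v m != 0%R /\ forall x, coef v x != 0%R -> mono_le x m.

Lemma mono_key_inj : injective mono_key.
Proof. by move=> [i j] [i' j'] [/val_inj-> /val_inj->]. Qed.

Lemma mono_lt_trans : transitive mono_lt.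
Proof. by move=> ???; apply: lexlt_trans. Qed.

Lemma mono_lt_total m m' : m != m' -> mono_lt m m' || mono_lt m' m.
Proof.
move=> neq; apply: lexlt_total; first by rewrite /= !size_tuple.
by rewrite (inj_eq mono_key_inj).
Qed.

Lemma mono_lt_wf : well_founded mono_lt.
Proof.
apply: (Wellfounded.Inclusion.wf_incl _ _
  (fun m m' => (size (mono_key m) == d.+1) && lexlt (mono_key m) (mono_key m'))).
  by move=> m m' lt_mm'; rewrite /= size_tuple eqxx.
exact: Wellfounded.Inverse_Image.wf_inverse_image (lexlt_wf d.+1).
Qed.

Lemma eq0_or_lead (v : vec d c) : finsupp v -> (forall x, coef v x = 0%R) \/ exists m, is_lead v m.
Proof.
move=> [S S_supp].
pose nz := [seq m <- [seq (i, j) | i <- S, j <- enum 'I_c] | coef v m != 0%R].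
have nzP m : coef v m != 0%R -> m \in nz.
  case: m => i j vm_neq0; rewrite mem_filter vm_neq0 /=.
  apply: (allpairs_f (fun i j => (i, j))); last by rewrite mem_enum.
  by apply: contraNT vm_neq0 => /S_supp vi0; rewrite /coef vi0.
have [nz_nil | /(seq_max_exists mono_lt_trans mono_lt_total)[m]] := eqVneq nz [::].
  by left=> x; apply: contraTeq isT => /nzP; rewrite nz_nil.
by rewrite mem_filter => /andP[vm_neq0 _] m_max; right; exists m; split=> // y /nzP/m_max.
Qed.

Definition mono_map (f : nat -> nat) (m : mono) : mono := ([tuple of map f m.1], m.2).

Lemma mono_lt_map f : {homo f : a b / a < b} ->
  forall x y, mono_lt (mono_map f x) (mono_map f y) = mono_lt x y.
Proof. by move=> f_incr x y; rewrite /mono_lt /= lexlt_map. Qed.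

Lemma mono_le_map f : {homo f : a b / a < b} ->
  forall x y, mono_le (mono_map f x) (mono_map f y) = mono_le x y.
Proof.
move=> f_incr x y; rewrite /mono_le mono_lt_map // inj_eq // => {x y} [[i j] [i' j']] [/= Eii' ->].
congr (_, _); apply: val_inj; apply: inj_map Eii'; exact/incn_inj/leq_mono.
Qed.

Lemma sym_actE sigma (u v : vec d c) :
  sym_act sigma u v <-> forall m, coef v (mono_map sigma m) = coef u m.
Proof. by split=> H => [[i j] | i j]; [apply: H | apply: (H (i, j))]. Qed.

(* [m'] is the image of [m] under a strictly increasing map of nat
   (incr_map_of_inc_dvd): no entry decreases and no gap between two entries
   of [m] shrinks. *)
Definition inc_dvd (m m' : mono) : bool :=
  [&& m.2 == m'.2, [forall s, tnth m.1 s <= tnth m'.1 s] &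
      [forall s, forall t, (tnth m.1 s <= tnth m.1 t) ==>
         (tnth m'.1 s + tnth m.1 t <= tnth m'.1 t + tnth m.1 s)]].

Lemma incr_map_of_inc_dvd m m' : inc_dvd m m' ->
  exists2 f, {homo f : a b / a < b} & mono_map f m = m'.
Proof.
case/and3P=> /eqP ej /forallP m_le /forallP gap_le.
pose f x := x + \max_(s | tnth m.1 s <= x) (tnth m'.1 s - tnth m.1 s).
exists f => [x y xy | ].
  rewrite /f -addSn leq_add //; apply/bigmax_leqP => s le_sx.
  exact/leq_bigmax_cond/(leq_trans le_sx)/ltnW.
rewrite [m']surjective_pairing -ej; congr (_, _); apply: eq_from_tnth => t.
rewrite tnth_map /f.
have max_le : \max_(s | tnth m.1 s <= tnth m.1 t) (tnth m'.1 s - tnth m.1 s)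
    <= tnth m'.1 t - tnth m.1 t.
  apply/bigmax_leqP => s le_st.
  move: (gap_le s) => /forallP/(_ t); rewrite le_st /=; have := m_le s; lia.
have max_ge := @leq_bigmax_cond _ (fun s => tnth m.1 s <= tnth m.1 t)
  (fun s => tnth m'.1 s - tnth m.1 s) t (leqnn _).
have := m_le t; lia.
Qed.

Lemma mono_mapK f g : cancel f g -> cancel (mono_map f) (mono_map g).
Proof.
by move=> fK [i j]; congr (_, _); apply: val_inj; rewrite /= -map_comp (eq_map fK) map_id.
Qed.

Lemma finsupp_bounded (v : vec d c) : finsupp v ->
  exists n, forall x, coef v x != 0%R -> forall a, a \in val x.1 -> a < n.
Proof.
move=> [S S_supp]; exists (\max_(i <- S) \max_(a <- val i) a).+1 => [[i j]] vx_neq0 a ai.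
have iS : i \in S by apply: contraNT vx_neq0 => /S_supp vi0; rewrite /coef vi0.
rewrite ltnS; apply: leq_trans (leq_bigmax_seq (P := xpredT)
  (F := fun i : idx d => \max_(a <- val i) a) i iS isT).
exact: (leq_bigmax_seq (P := xpredT) (F := id) a ai isT).
Qed.

Lemma sym_shift_lead (b : vec d c) m f : finsupp b -> is_lead b m -> {homo f : x y / x < y} ->
  exists sigma b', [/\ isSym sigma, sym_act sigma b b', is_lead b' (mono_map f m)
                    & coef b' (mono_map f m) = coef b m].
Proof.
move=> b_fin [bm_neq0 m_max] f_incr.
have [n b_bound] := finsupp_bounded b_fin.
have [sigma Ssigma sigma_f] := incr_agrees_with_Sym n f_incr.
have [[g sigmaK gK] _] := Ssigma.
pose b' : vec d c := fun i j => b [tuple of map g i] j.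
have b'_sigma x : coef b' (mono_map sigma x) = coef b x := congr1 (coef b) (mono_mapK sigmaK x).
have sigma_supp x : coef b x != 0%R -> mono_map sigma x = mono_map f x.
  move=> bx_neq0; congr (_, _); apply: val_inj; apply/eq_in_map => a ax.
  exact/sigma_f/(b_bound x).
have b'_fm : coef b' (mono_map f m) = coef b m by rewrite -sigma_supp // b'_sigma.
exists sigma, b'; split=> //; first exact/sym_actE.
split=> [|y]; first by rewrite b'_fm.
rewrite -(mono_mapK gK y) b'_sigma => by_neq0.
by rewrite sigma_supp // mono_le_map // m_max.
Qed.

(* Coordinates whose simultaneous growth forces [inc_dvd] (inc_dvd_of_coord),
   so that Dickson's lemma makes [inc_dvd] a well-quasi-order. *)
Definition dvd_coord (k : bool + 'I_d * 'I_d * 'I_3) (m : mono) : nat :=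
  match k with
  | inl b => if b then val m.2 else c - val m.2
  | inr (s, t, r) =>
    match val r with
    | 0 => tnth m.1 s
    | 1 => tnth m.1 t - tnth m.1 s
    | _ => tnth m.1 s <= tnth m.1 t
    end
  end.

Lemma inc_dvd_of_coord m m' : (forall k, dvd_coord k m <= dvd_coord k m') -> inc_dvd m m'.
Proof.
move=> coord_le; apply/and3P; split.
- apply/eqP/val_inj/eqP; rewrite eqn_leq; move: (coord_le (inl true)) (coord_le (inl false)) => /=.
  by have := ltn_ord m.2; have := ltn_ord m'.2; lia.
- by apply/forallP => s; move: (coord_le (inr (s, s, inord 0))); rewrite /= inordK.
apply/forallP => s; apply/forallP => t; apply/implyP => le_st.
move: (coord_le (inr (s, t, inord 1))) (coord_le (inr (s, t, inord 2))).
rewrite /= !inordK //= le_st /=; case: leqP => //= le_st' gap _; lia.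
Qed.

Lemma inc_dvd_chain (x : nat -> mono) :
  exists2 phi, {homo phi : a b / a < b} & {homo x \o phi : a b / a <= b >-> inc_dvd a b}.
Proof.
have [phi phi_incr coord_mono] := nondecreasing_subseq_fin (fun k n => dvd_coord k (x n)).
by exists phi => // a b ab; apply: inc_dvd_of_coord => k; apply: coord_mono.
Qed.

End Monomials.

Lemma biggcd_prefix_dvd (y : nat -> nat) : 0 < y 0 ->
  exists k, \big[gcdn/0]_(i < k.+1) y i %| y k.+1.
Proof.
move=> y0_gt0; apply: NNPP => no_dvd.
pose h k := \big[gcdn/0]_(i < k.+1) y i.
have h_gt0 k : 0 < h k.
  have := biggcdn_inf (ord0 : 'I_k.+1) (P := xpredT) (F := fun i => y i) isT (dvdnn (y 0)).
  by rewrite -/(h k); case: (h k) => //; rewrite dvd0n => /eqP y0; rewrite y0 in y0_gt0.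
have h_decr k : h k.+1 < h k.
  rewrite /h big_ord_recr /= -/(h k) ltn_neqAle dvdn_leq ?dvdn_gcdl // andbT.
  by apply/eqP => h_eq; apply: no_dvd; exists k; rewrite -/(h k) -h_eq dvdn_gcdr.
have h_bound k : h k + k <= h 0 by elim: k => [|k IH]; [rewrite addn0 | move: (h_decr k); lia].
by move: (h_bound (h 0).+1); lia.
Qed.

Lemma sum_neq0_In (T : Type) (l : seq T) (F : T -> int) :
  (\sum_(q <- l) F q)%R != 0%R -> exists2 q, List.In q l & F q != 0%R.
Proof.
elim: l => [|q l IH]; first by rewrite big_nil eqxx.
rewrite big_cons; have [-> | Fq_neq0] := eqVneq (F q) 0%R; last by exists q; first left.
by rewrite add0r => /IH[q' lq' Fq']; exists q'; first right.
Qed.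

Section Lattices.
Variables (d c : nat) (L : vec d c -> Prop).
Hypothesis L_lat : is_lattice L.

Lemma L_ext u v : L u -> (forall i j, u i j = v i j) -> L v.
Proof.
by move=> Lu uv; suff -> : v = u by []; do 2!apply: functional_extensionality => ?.
Qed.

Lemma L_finsupp v : L v -> finsupp v.
Proof. by case: L_lat => + _ _ _; apply. Qed.

Lemma L_scale (k : int) u : L u -> L (fun i j => k * u i j)%R.
Proof.
case: L_lat => _ L0 LD LN Lu.
have Ln n : L (fun i j => n%:Z * u i j)%R.
  elim: n => [|n IH]; first by apply: L_ext L0 _ => i j; rewrite mul0r.
  by apply: L_ext (LD _ _ IH Lu) _ => i j; rewrite -addn1 PoszD mulrDl mul1r.
case: k => n; first exact: Ln.
by apply: L_ext (LN _ (Ln n.+1)) _ => i j; rewrite NegzE mulNr.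
Qed.

Lemma L_zcomb (l : seq (int * vec d c)) : (forall q, List.In q l -> L q.2) ->
  L (fun i j => \sum_(q <- l) q.1 * q.2 i j)%R.
Proof.
case: L_lat => _ L0 LD _; elim: l => [|q l IH] Ll.
  by apply: L_ext L0 _ => i j; rewrite big_nil.
have Lq : L q.2 by apply: Ll; left.
have Ll' : L (fun i j => \sum_(q <- l) q.1 * q.2 i j)%R by apply: IH => q' lq'; apply: Ll; right.
by apply: L_ext (LD _ _ (L_scale q.1 Lq) Ll') _ => i j; rewrite big_cons.
Qed.

Lemma L_sub u v : L u -> L v -> L (fun i j => u i j - v i j)%R.
Proof. by case: L_lat => _ _ LD LN Lu Lv; apply: LD (LN _ Lv). Qed.

Lemma L_zspan (S : vec d c -> Prop) v : (forall u, S u -> L u) -> zspan S v -> L v.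
Proof.
move=> SL [l [Sl v_eq]]; apply: L_ext (L_zcomb _) _ => [q /Sl/SL // | i j].
by rewrite v_eq.
Qed.

End Lattices.

Lemma zspan_eq0 d c (S : vec d c -> Prop) v : (forall m, coef v m = 0%R) -> zspan S v.
Proof. by move=> v0; exists [::]; split=> // i j; rewrite big_nil; apply: (v0 (i, j)). Qed.

Lemma zspan_add_zcomb d c (S : vec d c -> Prop) w v (l : seq (int * vec d c)) :
  zspan S w -> (forall q, List.In q l -> S q.2) ->
  (forall i j, v i j = w i j + \sum_(q <- l) q.1 * q.2 i j)%R -> zspan S v.
Proof.
move=> [lw [Slw w_eq]] Sl v_eq; exists (lw ++ l); split.
  by move=> q /(List.in_app_or lw l q)[/Slw | /Sl].
by move=> i j; rewrite big_cat -w_eq v_eq.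
Qed.

Section EquivariantGroebner.
Variables (d c : nat) (L : vec d c -> Prop).
Hypotheses (L_lat : is_lattice L) (L_inv : sym_invariant L).
Local Notation mono := (idx d * 'I_c)%type.

Definition marked (Bs : seq (vec d c * mono)) : Prop :=
  forall p, List.In p Bs -> L p.1 /\ is_lead p.1 p.2.

Definition lead_gcd (Bs : seq (vec d c * mono)) (m : mono) : nat :=
  \big[gcdn/0]_(p <- Bs | inc_dvd p.2 m) `|coef p.1 p.2|.

Definition groebner (Bs : seq (vec d c * mono)) : Prop :=
  marked Bs /\ forall v m, L v -> is_lead v m -> lead_gcd Bs m %| `|coef v m|.

Lemma lead_gcd_dvd Bs m p : List.In p Bs -> inc_dvd p.2 m -> lead_gcd Bs m %| `|coef p.1 p.2|.
Proof.
rewrite /lead_gcd; elim: Bs => [//|p' Bs IH] /= [<- | pBs] p_dvd; rewrite big_cons.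
  by rewrite p_dvd dvdn_gcdl.
by case: ifP => _; [apply: dvdn_trans (dvdn_gcdr _ _) (IH pBs p_dvd) | apply: IH].
Qed.

Lemma marked_shift_in_orbit Bs p m : marked Bs -> List.In p Bs -> inc_dvd p.2 m ->
  exists2 b, sym_orbit (map fst Bs) b & [/\ L b, is_lead b m & coef b m = coef p.1 p.2].
Proof.
move=> Bs_marked pBs /incr_map_of_inc_dvd[f f_incr <-].
have [Lp p_lead] := Bs_marked p pBs.
have [sigma [b [Ssigma p_b b_lead b_lc]]] := sym_shift_lead (L_finsupp L_lat Lp) p_lead f_incr.
exists b; last by split=> //; exact: L_inv Ssigma _ _ Lp p_b.
by exists sigma, p.1; split=> //; apply: List.in_map.
Qed.

Lemma lead_coef_zcomb Bs m (a : int) : marked Bs -> lead_gcd Bs m %| `|a| ->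
  exists2 l : seq (int * vec d c),
    forall q, List.In q l -> [/\ sym_orbit (map fst Bs) q.2, L q.2 & is_lead q.2 m]
  & a = (\sum_(q <- l) q.1 * coef q.2 m)%R.
Proof.
elim: Bs a => [|p Bs IH] a Bs_marked.
  by rewrite /lead_gcd big_nil dvd0n absz_eq0 => /eqP->; exists [::]; rewrite ?big_nil.
have Bs'_marked : marked Bs by move=> q qBs; apply: Bs_marked; right.
have orbit_sub b : sym_orbit (map fst Bs) b -> sym_orbit (map fst (p :: Bs)) b.
  by move=> [sigma [u [? uBs ?]]]; exists sigma, u; split=> //; right.
rewrite /lead_gcd big_cons -/(lead_gcd Bs m); case: ifP => [p_dvd | _ dvd_a]; last first.
  have [l Hl ->] := IH a Bs'_marked dvd_a.
  by exists l => // q /Hl[/orbit_sub].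
set g := lead_gcd Bs m => dvd_a.
have [u [v bezout]] := Bezoutz (coef p.1 p.2) g.
have /dvdzP[k ->] : (gcdz (coef p.1 p.2) g %| a)%Z by [].
have [l Hl g_eq] := IH g Bs'_marked (dvdnn g).
have [b b_orbit [Lb b_lead b_lc]] := marked_shift_in_orbit Bs_marked (or_introl erefl) p_dvd.
exists (((k * u)%R, b) :: [seq ((k * v * q.1)%R, q.2) | q <- l]).
  move=> q /= [<- // | /List.in_map_iff[q' [<- /Hl[/orbit_sub]]]] //.
rewrite big_cons big_map /= b_lc -bezout g_eq mulrDr !mulrA mulr_sumr.
by congr (_ + _)%R; apply: eq_bigr => q _; rewrite !mulrA.
Qed.

Lemma L_sym_orbit Bs u : marked Bs -> sym_orbit (map fst Bs) u -> L u.
Proof.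
move=> Bs_marked [sigma [b [Ssigma /List.in_map_iff[p [<- pBs]] p_u]]].
exact: L_inv Ssigma _ _ (Bs_marked p pBs).1 p_u.
Qed.

Lemma groebner_zspan_le Bs m v : groebner Bs -> L v ->
  (forall x, coef v x != 0%R -> mono_le x m) -> zspan (sym_orbit (map fst Bs)) v.
Proof.
move=> [Bs_marked Bs_dvd].
elim/(well_founded_induction (@mono_lt_wf d c)): m v => m IH v Lv v_le.
have lc_dvd : lead_gcd Bs m %| `|coef v m|.
  have [-> | vm_neq0] := eqVneq (coef v m) 0%R; first by rewrite dvdn0.
  by apply: Bs_dvd => //; split.
have [l Hl lc_eq] := lead_coef_zcomb Bs_marked lc_dvd.
pose w : vec d c := fun i j => (v i j - \sum_(q <- l) q.1 * q.2 i j)%R.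
have Lw : L w by apply: L_sub (L_zcomb L_lat _) => // q /Hl[].
have w_lt x : coef w x != 0%R -> mono_lt x m.
  move=> wx_neq0; have [x_eq_m | x_neq_m] := eqVneq x m.
    by move: wx_neq0; rewrite x_eq_m /coef /w -/(coef v m) lc_eq subrr eqxx.
  suff : mono_le x m by rewrite /mono_le (negbTE x_neq_m).
  have [vx0 | /v_le //] := eqVneq (coef v x) 0%R.
  move: wx_neq0; rewrite /coef /w -/(coef v x) vx0 sub0r oppr_eq0.
  move=> /sum_neq0_In[q /Hl[_ _ [_ q_max]] qx_neq0].
  by apply: q_max; apply: contraNneq qx_neq0 => qx0; rewrite /= -/(coef q.2 x) qx0 mulr0.
apply: (@zspan_add_zcomb _ _ _ w _ l) => [| q /Hl[] // | i j]; last by rewrite /w subrK.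
have [w0 | [m' [wm'_neq0 m'_max]]] := eq0_or_lead (L_finsupp L_lat Lw); first exact: zspan_eq0.
exact: IH (w_lt _ wm'_neq0) w Lw m'_max.
Qed.

Lemma groebner_zspan Bs v : groebner Bs -> L v -> zspan (sym_orbit (map fst Bs)) v.
Proof.
move=> Bs_gb Lv; have [v0 | [m [_ m_max]]] := eq0_or_lead (L_finsupp L_lat Lv).
  exact: zspan_eq0.
exact: groebner_zspan_le Bs_gb Lv m_max.
Qed.

Lemma exists_groebner : exists Bs, groebner Bs.
Proof.
apply: NNPP => no_gb.
pose bad Bs p := [/\ L p.1, is_lead p.1 p.2 & ~~ (lead_gcd Bs p.2 %| `|coef p.1 p.2|)].
have bad_ex Bs : marked Bs -> exists p, bad Bs p.
  move=> Bs_marked; apply: NNPP => no_bad; apply: no_gb; exists Bs; split=> // v m Lv v_lead.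
  by apply: contraT => ndvd; exfalso; apply: no_bad; exists (v, m).
have [p0 _] : exists p, bad [::] p by apply: bad_ex => ? [].
have next_ex Bs : exists p, marked Bs -> bad Bs p.
  have [/bad_ex[p p_bad] | not_marked] := classic (marked Bs); first by exists p.
  by exists p0 => /not_marked.
have [next nextP] := choice _ next_ex.
pose fix basis k := if k is k'.+1 then next (basis k') :: basis k' else [::].
pose x k := next (basis k).
have basis_marked k : marked (basis k).
  by elim: k => [//|k IH] p /= [<- | /IH //]; have [] := nextP _ IH.
have x_in a k : a < k -> List.In (x a) (basis k).
  by elim: k => [//|k IH]; rewrite ltnS leq_eqVlt => /orP[/eqP-> | /IH]; [left | right].
have [phi phi_incr x_chain] := inc_dvd_chain (fun k => (x k).2).
pose y k := `|coef (x (phi k)).1 (x (phi k)).2|.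
have [_ [x0_neq0 _] _] := nextP _ (basis_marked (phi 0)).
have [k y_dvd] : exists k, \big[gcdn/0]_(i < k.+1) y i %| y k.+1.
  by apply: biggcd_prefix_dvd; rewrite absz_gt0.
have [_ _ /negP[]] := nextP _ (basis_marked (phi k.+1)); apply: dvdn_trans _ y_dvd.
apply/dvdn_biggcdP => i _; apply: lead_gcd_dvd; first exact/x_in/phi_incr.
exact: x_chain (ltnW (ltn_ord i)).
Qed.

End EquivariantGroebner.

Unset Implicit Arguments.

Theorem theorem5p1 (c d : nat) (hc : (0 < c)%N) (hd : (0 < d)%N)
  (L : vec d c -> Prop) :
  is_lattice L -> sym_invariant L ->
  exists B : seq (vec d c),
    (forall u, List.In u B -> L u) /\
    (forall v, L v <-> zspan (sym_orbit B) v).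
Proof.
move=> L_lat L_inv; have [Bs Bs_gb] := exists_groebner L; have [Bs_marked _] := Bs_gb.
exists (map fst Bs); split.
  by move=> u /List.in_map_iff[p [<- /Bs_marked[]]].
move=> v; split=> [Lv | v_span]; first exact: (groebner_zspan L_lat L_inv Bs_gb Lv).
exact: (L_zspan L_lat (fun u => L_sym_orbit L_inv Bs_marked) v_span).
Qed.
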